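(* Fix a resource block $n$. Let $\mathcal K=\{1,\dots,K\}$, and for each $k\in\mathcal K$ let $M^{(k)}\ge 1$ be an integer and $\tilde{\mathcal K}^{(k)}\subseteq\mathcal K\setminus\{k\}$ a set with $|\tilde{\mathcal K}^{(k)}|=\tilde K$ for all $k$. Let $w^{(k)}_m, r^{(k)}_{m,n}, \tilde r^{(k,\tilde k)}_{m,n}$ be arbitrary real coefficients. Consider the linear program in the variables $x^{(k)}_{m,n}$ ($k\in\mathcal K$, $m\in\{1,\dots,M^{(k)}\}$), $y^{(k,\tilde k)}_{m,n}$ ($k\in\mathcal K$, $\tilde k\in\tilde{\mathcal K}^{(k)}$, $m\in\{1,\dots,M^{(k)}\}$) and $I^{(k)}_n$ ($k\in\mathcal K$): $$\max\ \sum_{k=1}^K\sum_{m=1}^{M^{(k)}} w^{(k)}_m\Big(x^{(k)}_{m,n}r^{(k)}_{m,n}+\sum_{\tilde k\in\tilde{\mathcal K}^{(k)}} y^{(k,\tilde k)}_{m,n}\tilde r^{(k,\tilde k)}_{m,n}\Big)$$ subject to $\sum_{m=1}^{M^{(k)}}x^{(k)}_{m,n}=1-I^{(k)}_n$ for all $k$; $\sum_{\tilde k\in\tilde{\mathcal K}^{(k)}}y^{(k,\tilde k)}_{m,n}\le x^{(k)}_{m,n}$ for all $k,m$; $\sum_{m=1}^{M^{(k)}}y^{(k,\tilde k)}_{m,n}\le I^{(\tilde k)}_n$ for all $k$ and $\tilde k\in\tilde{\mathcal K}^{(k)}$; and $x^{(k)}_{m,n},y^{(k,\tilde k)}_{m,n},I^{(k)}_n\in[0,1]$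 for all indices. Then at every optimal vertex (basic optimal solution) of this linear program, the percentage of variables taking a value in $\{0,1\}$ is at least $$\frac{\tilde K(\bar M-1)}{(\tilde K+1)\bar M+1}\cdot 100\%,\qquad \bar M=\frac1K\sum_{k=1}^K M^{(k)}.$$
   Context: This linear program is the relaxation (binary constraints replaced by $[0,1]$ bounds) of a binary linear program for weighted sum-rate maximization with resource-block blanking in a $K$-sector cellular network: $x^{(k)}_{m,n}$ indicates assignment of resource block $n$ to user $m$ in sector $k$, $I^{(k)}_n$ indicates that block $n$ is blanked in sector $k$, and $y^{(k,\tilde k)}_{m,n}$ are auxiliary variables. $\tilde K$ is the common number of neighboring interfering sectors per sector and $\bar M$ the average number of users per sector. *)

From HB Require Import structures.
From mathcomp Require Import all_boot all_order all_algebra.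
Set Implicit Arguments. Unset Strict Implicit. Unset Printing Implicit Defensive.
Import Order.TTheory GRing.Theory Num.Theory.
Local Open Scope ring_scope.

(* The LP relaxation for a fixed resource block n (the index n is dropped).
   Sectors are 'I_K; sector k has M k users ('I_(M k));
   Ktil k is the set of neighbouring interfering sectors of k. *)
Section LP.
Variable R : realFieldType.
Variable K : nat.
Variable M : 'I_K -> nat.
Variable Ktil : 'I_K -> {set 'I_K}.

Definition XI : finType := {k : 'I_K & 'I_(M k)}.
Definition YI0 : finType := {k : 'I_K & ('I_K * 'I_(M k))%type}.
Definition YI : finType := {p : YI0 | (tagged p).1 \in Ktil (tag p)}.
Definition var : finType := ((XI + YI) + 'I_K)%type.

Definition xvar (i : XI) : var := inl (inl i).
Definition yvar (p : YI) : var := inl (inr p).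
Definition Ivar (k : 'I_K) : var := inr k.

Definition yk (p : YI) : 'I_K := tag (val p).
Definition ykt (p : YI) : 'I_K := (tagged (val p)).1.
Definition ym (p : YI) : 'I_(M (yk p)) := (tagged (val p)).2.
Definition yx (p : YI) : XI := Tagged (fun k => 'I_(M k)) (ym p).

Definition feasible (z : {ffun var -> R}) : Prop :=
  [/\ (forall k : 'I_K,
         \sum_(m < M k) z (xvar (Tagged (fun k => 'I_(M k)) m)) = 1 - z (Ivar k)),
      (forall i : XI, \sum_(p : YI | yx p == i) z (yvar p) <= z (xvar i)),
      (forall k kt : 'I_K, kt \in Ktil k ->
         \sum_(p : YI | (yk p == k) && (ykt p == kt)) z (yvar p) <= z (Ivar kt))
    & (forall v : var, 0 <= z v <= 1)].

Variable w r : forall k : 'I_K, 'I_(M k) -> R.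
Variable rt : forall k : 'I_K, 'I_K -> 'I_(M k) -> R.

Definition objective (z : {ffun var -> R}) : R :=
  \sum_(i : XI) @w (tag i) (tagged i) *
     (z (xvar i) * @r (tag i) (tagged i)
      + \sum_(p : YI | yx p == i) z (yvar p) * @rt (yk p) (ykt p) (ym p)).

Definition optimal (z : {ffun var -> R}) : Prop :=
  feasible z /\ forall z', feasible z' -> objective z' <= objective z.

Definition vertex (z : {ffun var -> R}) : Prop :=
  feasible z /\
  forall (z1 z2 : {ffun var -> R}) (t : R),
    feasible z1 -> feasible z2 -> 0 < t < 1 ->
    (forall v, z v = t * z1 v + (1 - t) * z2 v) -> z1 = z2.

Definition n_integral (z : {ffun var -> R}) : nat :=
  #|[pred v : var | (z v == 0) || (z v == 1)]|.

Definition Mbar : R := (\sum_(k < K) (M k)%:R) / K%:R.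

End LP.

From HB Require Import structures.
From mathcomp Require Import all_boot all_order all_algebra.
From mathcomp Require Import ring lra zify.
Import Order.TTheory GRing.Theory Num.Theory.
Set Implicit Arguments. Unset Strict Implicit. Unset Printing Implicit Defensive.
Local Open Scope ring_scope.

(** At an extreme point [z] of the feasible polytope, the fractional coordinates
    ([0 < z v < 1]) are at most as many as the constraints besides the bounds
    [0 <= z v <= 1]: otherwise some nonzero direction [u] supported on them is
    annihilated by every constraint row, [z + s u] and [z - s u] are feasible for
    small [s > 0], and [z] is their midpoint.  With [S] users in total there are
    [K + S + K Kt] such constraints (one per sector, one per user, one per
    neighbouring pair) for [S + Kt S + K] variables, so at least [Kt (S - K)]
    variables are integral; dividing by the number of variables gives the bound. *)

Section Kernel.
Variable R : fieldType.

Lemma sum_indicator_mul (T : finType) (x : T) (f : T -> R) :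
  \sum_v (x == v)%:R * f v = f x.
Proof.
rewrite (bigD1 x) //= eqxx mul1r big1 ?addr0 // => v.
by rewrite eq_sym => /negbTE ->; rewrite mul0r.
Qed.

Lemma sum_count_preimage_mul (T J : finType) (P : pred J) (g : J -> T)
    (f : T -> R) :
  \sum_v (\sum_(j | P j) (g j == v)%:R) * f v = \sum_(j | P j) f (g j).
Proof.
under eq_bigr do rewrite mulr_suml.
by rewrite exchange_big; apply: eq_bigr => j _; apply: sum_indicator_mul.
Qed.

Lemma underdetermined_kernel (I J : finType) (F : {set I}) (a : J -> I -> R) :
  (#|J| < #|F|)%N ->
  exists u : I -> R, [/\ exists i, u i != 0, forall i, i \notin F -> u i = 0
     & forall j, \sum_i a j i * u i = 0].
Proof.
move=> ltJF.
pose A : 'M[R]_(#|F|, #|J|) := \matrix_(t, s) a (enum_val s) (enum_val t).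
have /rowV0Pn[w /[!sub_kermx] /eqP wA w_neq0] : kermx A != 0.
  rewrite -mxrank_eq0 mxrank_ker subn_eq0 -ltnNge.
  exact: leq_ltn_trans (rank_leq_col A) ltJF.
have [t0 wt0] : exists t0, w 0 t0 != 0.
  apply/existsP; apply: contraNT w_neq0 => /existsPn w0.
  by apply/eqP/rowP => t; rewrite mxE; apply/eqP; rewrite -[_ == _]negbK w0.
exists (fun i => \sum_t (enum_val t == i)%:R * w 0 t); split.
- exists (enum_val t0).
  under eq_bigr do rewrite (inj_eq enum_val_inj) eq_sym.
  by rewrite sum_indicator_mul.
- move=> i iF; apply: big1 => t _.
  by case: eqP (enum_valP t) => [-> /[!(negbTE iF)] |_ _]; rewrite ?mul0r.
- move=> j; under eq_bigr do rewrite mulr_sumr.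
  rewrite exchange_big; transitivity ((w *m A) 0 (enum_rank j)).
    rewrite !mxE; apply: eq_bigr => t _.
    rewrite mxE enum_rankK mulrC -(sum_indicator_mul _ (fun i => a j i * w 0 t)).
    by apply: eq_bigr => i _; rewrite mulrCA.
  by rewrite wA mxE.
Qed.

End Kernel.

Definition fractional (R : numDomainType) (T : finType) (z : T -> R) : {set T} :=
  [set v | 0 < z v < 1].

Lemma exists_pos_lower_bound (R : realDomainType) (T : finType) (P : pred T)
    (b : T -> R) :
  (forall i, P i -> 0 < b i) -> exists2 s, 0 < s & forall i, P i -> s <= b i.
Proof.
move=> b_gt0; exists (\big[Num.min/1]_(i | P i) b i).
  by elim/big_ind: _ => // x y x_gt0 y_gt0; rewrite lt_min x_gt0.
by move=> i Pi; rewrite (bigD1 i) //= ge_min lexx.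
Qed.

Section ExtremePoint.
Variables (R : realFieldType) (T C : finType).
Variables (a : C -> T -> R) (P : {ffun T -> R} -> Prop) (z : {ffun T -> R}).

Hypothesis z_box : forall v, 0 <= z v <= 1.
Hypothesis P_kernel_shift : forall u : T -> R,
  (forall c, \sum_v a c v * u v = 0) -> (forall v, 0 <= z v + u v <= 1) ->
  P [ffun v => z v + u v].
Hypothesis z_extreme : forall z1 z2 t, P z1 -> P z2 -> 0 < t < 1 ->
  (forall v, z v = t * z1 v + (1 - t) * z2 v) -> z1 = z2.

Lemma box_shift_small (u : T -> R) :
  (forall v, v \notin fractional z -> u v = 0) ->
  exists2 s, 0 < s & forall e, `|e| <= s -> forall v, 0 <= z v + e * u v <= 1.
Proof.
move=> u_supp.
pose slack v := Num.min (z v) (1 - z v).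
have [s s_gt0 s_le] : exists2 s, 0 < s &
    forall v, v \in fractional z -> s <= slack v / (`|u v| + 1).
  apply: exists_pos_lower_bound => v; rewrite inE => /andP[zv_gt0 zv_lt1].
  by rewrite divr_gt0 ?lt_min ?zv_gt0 ?subr_gt0 // ltr_wpDl.
exists s => // e le_es v; have [vF|/u_supp->] := boolP (v \in fractional z);
  last by rewrite mulr0 addr0.
have slack_lez : slack v <= z v by rewrite ge_min lexx.
have slack_le1z : slack v <= 1 - z v by rewrite ge_min lexx orbT.
have u1_gt0 : 0 < `|u v| + 1 by rewrite ltr_wpDl.
have : `|e * u v| <= slack v.
  rewrite normrM; apply: le_trans (ler_wpM2r (normr_ge0 _) le_es) _.
  apply: le_trans (ler_wpM2r (normr_ge0 _) (s_le v vF)) _.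
  rewrite mulrAC ler_pdivrMr // ler_wpM2l ?lerDl //.
  move: vF; rewrite inE => /andP[? ?]; rewrite le_min subr_ge0 !ltW //.
by rewrite ler_norml => /andP[? ?]; apply/andP; split; lra.
Qed.

Lemma card_fractional_le : (#|fractional z| <= #|C|)%N.
Proof.
rewrite leqNgt; apply/negP => /(underdetermined_kernel a)[u [[i ui] u_supp u_ker]].
have [s s_gt0 s_box] := box_shift_small u_supp.
have shift_ker e c : \sum_v a c v * (e * u v) = 0.
  by under eq_bigr do rewrite mulrCA; rewrite -mulr_sumr u_ker mulr0.
have shiftP e : `|e| <= s -> P [ffun v => z v + e * u v].
  by move=> le_es; apply: P_kernel_shift; [apply: shift_ker | apply: s_box].
have half_in01 : 0 < (1 / 2 : R) < 1 by apply/andP; split; lra.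
have le_ss : `|s| <= s by rewrite ger0_norm // ltW.
have le_Nss : `|- s| <= s by rewrite normrN.
have : [ffun v => z v + s * u v] = [ffun v => z v + - s * u v].
  apply: z_extreme (shiftP _ le_ss) (shiftP _ le_Nss) half_in01 _ => v.
  by rewrite !ffunE; field.
move=> /ffunP/(_ i); rewrite !ffunE mulNr => /addrI/eqP.
by rewrite -subr_eq0 opprK -mulr2n mulrn_eq0 mulf_eq0 (gt_eqF s_gt0) (negbTE ui).
Qed.

End ExtremePoint.

Section Constraints.
Variables (R : realFieldType) (K : nat) (M : 'I_K -> nat) (Ktil : 'I_K -> {set 'I_K}).

Definition neighbour_pair : finType := {p : 'I_K * 'I_K | p.2 \in Ktil p.1}.
Definition constraint : finType := (('I_K + XI M) + neighbour_pair)%type.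

(* Left-hand sides, normalised so that the constraints read [= 1], [<= 0] and [<= 0]. *)
Definition constraint_lhs (c : constraint) (f : var M Ktil -> R) : R :=
  match c with
  | inl (inl k) => \sum_(m < M k) f (xvar Ktil (Tagged (fun k => 'I_(M k)) m))
                   + f (Ivar M Ktil k)
  | inl (inr i) => \sum_(p : YI M Ktil | yx p == i) f (yvar p) - f (xvar Ktil i)
  | inr q => \sum_(p : YI M Ktil | (yk p == (val q).1) && (ykt p == (val q).2))
               f (yvar p) - f (Ivar M Ktil (val q).2)
  end.

Definition constraint_coef (c : constraint) (v : var M Ktil) : R :=
  constraint_lhs c (fun u => (u == v)%:R).

Lemma constraint_lhsE c f :
  constraint_lhs c f = \sum_v constraint_coef c v * f v.
Proof.
rewrite /constraint_coef; case: c => [[k|i]|q] /=.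
- under [RHS]eq_bigr do rewrite mulrDl.
  by rewrite big_split /= sum_count_preimage_mul sum_indicator_mul.
- under [RHS]eq_bigr do rewrite mulrBl.
  by rewrite sumrB /= sum_count_preimage_mul sum_indicator_mul.
- under [RHS]eq_bigr do rewrite mulrBl.
  by rewrite sumrB /= sum_count_preimage_mul sum_indicator_mul.
Qed.

Lemma feasible_kernel_shift (z : {ffun var M Ktil -> R}) :
  feasible z -> forall u : var M Ktil -> R,
  (forall c, \sum_v constraint_coef c v * u v = 0) ->
  (forall v, 0 <= z v + u v <= 1) -> feasible [ffun v => z v + u v].
Proof.
move=> [z_part z_y_x z_y_I _] u u_ker zu_box.
have lhs_shift c : constraint_lhs c [ffun v => z v + u v] = constraint_lhs c z.
  rewrite !constraint_lhsE; under eq_bigr do rewrite ffunE mulrDr.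
  by rewrite big_split /= u_ker addr0.
split=> [k | i | k kt kt_k | v]; last by rewrite ffunE.
- have := lhs_shift (inl (inl k)); rewrite /= z_part subrK => lhs1.
  by rewrite -lhs1 addrK.
- have := lhs_shift (inl (inr i)); rewrite /= => lhs0.
  by rewrite -subr_le0 lhs0 subr_le0 z_y_x.
- have := lhs_shift (inr (exist _ (k, kt) kt_k)); rewrite /= => lhs0.
  by rewrite -subr_le0 lhs0 subr_le0 z_y_I.
Qed.

End Constraints.

Section Counting.
Variables (K : nat) (M : 'I_K -> nat) (Ktil : 'I_K -> {set 'I_K}) (Kt : nat).
Hypothesis card_Ktil : forall k, #|Ktil k| = Kt.

Local Notation S := (\sum_(k < K) M k)%N.

Lemma card_XI : #|XI M| = S.
Proof.
rewrite card_tagged sumnE big_map big_enum /=.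
by apply: eq_bigr => k _; rewrite card_ord.
Qed.

Lemma card_YI : #|YI M Ktil| = (Kt * S)%N.
Proof.
rewrite card_sig -sum1_card big_distrr /=.
transitivity (\sum_(k < K) \sum_(j : 'I_K * 'I_(M k) | j.1 \in Ktil k) 1)%N.
  by rewrite sig_big_dep; apply: eq_bigl => p; rewrite !inE.
apply: eq_bigr => k _; rewrite -(card_Ktil k).
transitivity (\sum_(a in Ktil k) \sum_(b < M k) 1)%N.
  by rewrite pair_big; apply: eq_bigl => p /=; rewrite andbT.
by rewrite !sum_nat_const card_ord muln1.
Qed.

Lemma card_neighbour_pair : #|neighbour_pair Ktil| = (K * Kt)%N.
Proof.
rewrite card_sig -sum1_card.
transitivity (\sum_(k < K) \sum_(kt in Ktil k) 1)%N.
  by rewrite pair_big_dep; apply: eq_bigl => p; rewrite !inE.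
under eq_bigr do rewrite sum1_card card_Ktil.
by rewrite sum_nat_const card_ord.
Qed.

Lemma card_var : #|var M Ktil| = (S + Kt * S + K)%N.
Proof. by rewrite !card_sum card_XI card_YI card_ord. Qed.

Lemma card_constraint : #|constraint M Ktil| = (K + S + K * Kt)%N.
Proof. by rewrite !card_sum card_ord card_XI card_neighbour_pair. Qed.

End Counting.

Lemma n_integral_add_fractional (R : realFieldType) (K : nat) (M : 'I_K -> nat)
    (Ktil : 'I_K -> {set 'I_K}) (z : {ffun var M Ktil -> R}) :
  (forall v, 0 <= z v <= 1) ->
  (n_integral z + #|fractional z|)%N = #|var M Ktil|.
Proof.
move=> z_box; rewrite -(cardC (fractional z)) addnC; congr addn.
apply: eq_card => v; rewrite !inE.
have /andP[z_ge0 z_le1] := z_box v.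
by rewrite !lt_def z_ge0 z_le1 !andbT negb_and !negbK (eq_sym 1).
Qed.

(* With [s] users in [k] sectors, [s / k] is [Mbar]; for [k = 0] the left side is
   [- 100 t] because [0 / 0 = 0]. *)
Lemma integral_share_bound (R : realFieldType) (n s t k : nat) :
  (t * s <= n + k * t)%N -> (k = 0 -> s = 0)%N ->
  t%:R * (s%:R / k%:R - 1) / ((t%:R + 1) * (s%:R / k%:R) + 1) * 100
    <= n%:R / (s + t * s + k)%N%:R * (100 : R).
Proof.
move=> le_ts k0_s0; have [k0|k_gt0] := posnP k.
  rewrite k0_s0 // k0 muln0 invr0 !(mulr0, sub0r, mul0r, add0r, invr1).
  by rewrite mulr1 mulrN1 mulNr oppr_le0 mulr_ge0.
rewrite ler_pM2r ?ltr0n // !natrD !natrM.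
have le_ts' : t%:R * s%:R <= n%:R + k%:R * t%:R :> R.
  by rewrite -!natrM -natrD ler_nat.
have kR_gt0 : 0 < k%:R :> R by rewrite ltr0n.
have ts_ge0 : 0 <= t%:R * s%:R :> R by rewrite mulr_ge0.
have s_ge0 : 0 <= s%:R :> R := ler0n _ _.
have -> : t%:R * (s%:R / k%:R - 1) / ((t%:R + 1) * (s%:R / k%:R) + 1)
        = (t%:R * s%:R - k%:R * t%:R) / (s%:R + t%:R * s%:R + k%:R) :> R.
  by field; rewrite !gt_eqF //; lra.
by rewrite ler_pM2r ?invr_gt0; lra.
Qed.

Theorem proposition1 (R : realFieldType) (K : nat) (M : 'I_K -> nat)
  (Ktil : 'I_K -> {set 'I_K}) (Kt : nat)
  (hM : forall k, (1 <= M k)%N)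
  (hKtil : forall k, k \notin Ktil k)
  (hcard : forall k, #|Ktil k| = Kt)
  (w r : forall k : 'I_K, 'I_(M k) -> R)
  (rt : forall k : 'I_K, 'I_K -> 'I_(M k) -> R)
  (z : {ffun var M Ktil -> R}) :
  optimal w r rt z -> vertex z ->
  (n_integral z)%:R / #|var M Ktil|%:R * 100
    >= Kt%:R * (Mbar R M - 1) / ((Kt%:R + 1) * Mbar R M + 1) * 100.
Proof.
move=> _ [z_feas z_extreme]; have [_ _ _ z_box] := z_feas.
have := card_fractional_le z_box (feasible_kernel_shift z_feas) z_extreme.
have := n_integral_add_fractional z_box.
rewrite (card_constraint M hcard) (card_var M hcard) => n_frac le_frac.
set S := (\sum_(k < K) M k)%N in n_frac le_frac *.
rewrite /Mbar -natr_sum -/S; apply: integral_share_bound; first lia.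
by move=> K0; rewrite /S; subst K; rewrite big_ord0.
Qed.
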